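(* Let $K$ be a subdivision of the standard $n$-simplex, i.e. an ordered, locally finite simplicial complex with $|K|=\Delta^n\subset\mathbb{A}^n$ such that every simplex of $K$ is affinely contained in a simplex of $\Delta^n$. Then there exists a smooth homotopy $\{h_t:\mathbb{A}^n\to\mathbb{A}^n\}_{t\in[0,1]}$ such that (i) $h_0=\mathrm{id}$; (ii) for every $t$, $h_t$ maps each closed simplex of $K$ into itself; (iii) each closed simplex of $K$ has an open neighborhood in $\mathbb{A}^n$ which $h_1$ maps into that same simplex.
   Context: $\mathbb{A}^n=\{x\in\mathbb{R}^{n+1}:\sum_ix_i=1\}$, an affine space of dimension $n$, and $\Delta^n\subset\mathbb{A}^n$ is the closed standard simplex (all coordinates nonnegative). A smooth homotopy means a smooth map $\mathbb{A}^n\times[0,1]\to\mathbb{A}^n$ (equivalently, after reparametrization, smooth in $t$). *)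

From Stdlib Require Import Reals.
From mathcomp Require Import all_boot.

Set Implicit Arguments.
Unset Strict Implicit.
Unset Printing Implicit Defensive.

Local Open Scope R_scope.

(* A point of R^(n+1); A^n and Delta^n live inside this space. *)
Definition pt (n : nat) := 'I_n.+1 -> R.

Definition inA (n : nat) (x : pt n) : Prop :=
  \big[Rplus/0]_(i < n.+1) x i = 1.

Definition inDelta (n : nat) (x : pt n) : Prop :=
  inA x /\ forall i, 0 <= x i.

(* A geometric simplex is given by its (ordered) list of vertices;
   in_hull s x : x lies in the closed simplex (convex hull) spanned by s. *)
Definition in_hull (n : nat) (s : seq (pt n)) (x : pt n) : Prop :=
  exists w : nat -> R,
    (forall j, (j < size s)%N -> 0 <= w j) /\
    \big[Rplus/0]_(j < size s) w j = 1 /\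
    forall i, x i = \big[Rplus/0]_(j < size s) (w j * nth (fun _ => 0) s j i).

Definition aff_indep (n : nat) (s : seq (pt n)) : Prop :=
  forall c : nat -> R,
    \big[Rplus/0]_(j < size s) c j = 0 ->
    (forall i, \big[Rplus/0]_(j < size s) (c j * nth (fun _ => 0) s j i) = 0) ->
    forall j, (j < size s)%N -> c j = 0.

Definition face (n : nat) (t s : seq (pt n)) : Prop :=
  exists m : bitseq, size m = size s /\ t = mask m s /\ t <> [::].

Record subdivides_std_simplex (n : nat) (K : seq (pt n) -> Prop) : Prop := {
  sd_nonempty : forall s, K s -> s <> [::];
  sd_indep : forall s, K s -> aff_indep s;
  sd_faces : forall s t, K s -> face t s -> K t;
  sd_inter : forall s t, K s -> K t ->
    (forall x, ~ (in_hull s x /\ in_hull t x)) \/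
    (exists r, face r s /\ face r t /\
       forall x, in_hull r x <-> (in_hull s x /\ in_hull t x));
  sd_ordered : forall s t, K s -> K t ->
    (forall x, in_hull s x <-> in_hull t x) -> s = t;
  sd_locfin : forall x : pt n, exists d, 0 < d /\
    exists L : seq (seq (pt n)), forall s, K s ->
      (exists y, in_hull s y /\ forall i, Rabs (y i - x i) < d) -> List.In s L;
  sd_support : forall x : pt n, inDelta x <-> exists s, K s /\ in_hull s x;
  sd_in_face : forall s, K s -> exists F : seq 'I_n.+1, F <> [::] /\
    forall x, in_hull s x -> inDelta x /\ forall i, i \notin F -> x i = 0
}.

Definition upd (m : nat) (x : 'I_m -> R) (i : 'I_m) (s : R) : 'I_m -> R :=
  fun j => if j == i then s else x j.

Definition contR (m : nat) (f : ('I_m -> R) -> R) : Prop :=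
  forall x eps, 0 < eps -> exists d, 0 < d /\
    forall y, (forall i, Rabs (y i - x i) < d) -> Rabs (f y - f x) < eps.

Fixpoint Ck (m k : nat) (f : ('I_m -> R) -> R) : Prop :=
  match k with
  | 0 => contR f
  | k'.+1 => contR f /\ forall i : 'I_m, exists g : ('I_m -> R) -> R,
      (forall x, derivable_pt_lim (fun s => f (upd x i s)) (x i) (g x)) /\ Ck k' g
  end.

Definition smooth (m : nat) (f : ('I_m -> R) -> R) : Prop := forall k, Ck k f.

(* H : R^(n+1) x R -> R^(n+1) is smooth (as a map R^(n+2) -> R^(n+1),
   the last coordinate being the time t). *)
Definition smooth_homotopy (n : nat) (H : pt n -> R -> pt n) : Prop :=
  forall j : 'I_n.+1,
    smooth (fun v : 'I_n.+2 -> R =>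
              H (fun i => v (widen_ord (leqnSn n.+1) i)) (v ord_max) j).

Definition open_in_A (n : nat) (U : pt n -> Prop) : Prop :=
  forall x, U x -> inA x /\ exists d, 0 < d /\
    forall y, inA y -> (forall i, Rabs (y i - x i) < d) -> U y.

(* For each point t pick a vertex v(t) of its carrier simplex and a radius
   r(t) > 0 such that every simplex of K not having v(t) as a vertex stays at
   distance >= r(t) from t (minimality of the carrier, local finiteness and
   closedness of simplices).  Cover a neighbourhood of Delta^n by finitely many
   small cubes centred at points p and let h_t x = x + t (h_1 x - x), where h_1 x
   is the convex combination of the v(p) weighted by flat bumps around the p,
   normalised by a smooth positive function equal to the total weight near
   Delta^n.  Near a simplex s only bumps with v(p) in s survive, so h_1 maps a
   neighbourhood of s into s; as h_t x is a convex combination of x and h_1 x,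
   every h_t preserves the simplices. *)

From Stdlib Require Import Reals Lra.
From Stdlib Require Import Classical ClassicalEpsilon FunctionalExtensionality.
From mathcomp Require Import all_boot.
From HB Require Import structures.
From Coquelicot Require Compactness.

Set Implicit Arguments.
Unset Strict Implicit.
Set Warnings "-redundant-canonical-projection -notation-overridden".

Local Open Scope R_scope.

Lemma Rplus_associative : associative Rplus.
Proof. by move=> x y z; rewrite Rplus_assoc. Qed.

HB.instance Definition _ :=
  Monoid.isComLaw.Build R 0 Rplus Rplus_associative Rplus_comm Rplus_0_l.
HB.instance Definition _ := Monoid.isMulLaw.Build R 0 Rmult Rmult_0_l Rmult_0_r.
HB.instance Definition _ :=
  Monoid.isAddLaw.Build R Rmult Rplus Rmult_plus_distr_r Rmult_plus_distr_l.

Section RealSums.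
Variables (I : Type) (r : seq I) (P : pred I).
Implicit Types F G : I -> R.

Lemma sumR_ge0 F : (forall i, 0 <= F i) -> 0 <= \big[Rplus/0]_(i <- r | P i) F i.
Proof. by move=> F_ge0; apply: (big_ind (fun x => 0 <= x)) => //; [lra | move=> *; lra]. Qed.

Lemma sumR_le F G : (forall i, F i <= G i) ->
  \big[Rplus/0]_(i <- r | P i) F i <= \big[Rplus/0]_(i <- r | P i) G i.
Proof. by move=> FG; apply: (big_ind2 Rle) => //; [lra | move=> *; lra]. Qed.

Lemma Rabs_sumR_le F :
  Rabs (\big[Rplus/0]_(i <- r | P i) F i) <= \big[Rplus/0]_(i <- r | P i) Rabs (F i).
Proof.
apply: (big_ind2 (fun x y => Rabs x <= y)); first by rewrite Rabs_R0; lra.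
  by move=> x1 y1 x2 y2 *; have := Rabs_triang x1 x2; lra.
by move=> *; lra.
Qed.

Lemma sumR_mull c F :
  c * \big[Rplus/0]_(i <- r | P i) F i = \big[Rplus/0]_(i <- r | P i) (c * F i).
Proof. exact: big_distrr. Qed.

Lemma sumR_mulr c F :
  (\big[Rplus/0]_(i <- r | P i) F i) * c = \big[Rplus/0]_(i <- r | P i) (F i * c).
Proof. exact: big_distrl. Qed.

Lemma sumR_opp F :
  \big[Rplus/0]_(i <- r | P i) - F i = - \big[Rplus/0]_(i <- r | P i) F i.
Proof. by rewrite (big_morph Ropp Ropp_plus_distr Ropp_0). Qed.

Lemma sumR_sub F G : \big[Rplus/0]_(i <- r | P i) (F i - G i) =
  \big[Rplus/0]_(i <- r | P i) F i - \big[Rplus/0]_(i <- r | P i) G i.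
Proof. by rewrite big_split sumR_opp. Qed.

End RealSums.

Section RealSumsList.
Variables (I : Type) (r : seq I).
Implicit Types F G : I -> R.

Lemma eq_sumR_In F G : (forall i, List.In i r -> F i = G i) ->
  \big[Rplus/0]_(i <- r) F i = \big[Rplus/0]_(i <- r) G i.
Proof.
elim: r => [|a r' IH] FG; first by rewrite !big_nil.
by rewrite !big_cons FG /= ?IH // => [i ri|]; [apply: FG; right | left].
Qed.

Lemma sumR_ge_In F j : (forall i, 0 <= F i) -> List.In j r ->
  F j <= \big[Rplus/0]_(i <- r) F i.
Proof.
move=> F_ge0; elim: r => [|a r' IH] //= [<-|jr]; rewrite big_cons.
  have : 0 <= \big[Rplus/0]_(i <- r') F i by apply: sumR_ge0.
  lra.
by have := IH jr; have := F_ge0 a; lra.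
Qed.

End RealSumsList.

Lemma sumR_ge_ord N (F : 'I_N -> R) j : (forall i, 0 <= F i) ->
  F j <= \big[Rplus/0]_(i < N) F i.
Proof.
move=> F_ge0; rewrite (bigD1 j) //= -{1}(Rplus_0_r (F j)).
by apply: Rplus_le_compat_l; apply: sumR_ge0.
Qed.

Lemma sumR_const_ord N c : \big[Rplus/0]_(i < N) c = INR N * c.
Proof.
rewrite big_const_ord; elim: N => [|k IH]; first by rewrite /=; ring.
by rewrite iterS IH S_INR; ring.
Qed.

Lemma sumR_indicator N (k : nat) (g : nat -> R) :
  \big[Rplus/0]_(j < N) (if (j : nat) == k then g (j : nat) else 0) = if (k < N)%N then g k else 0.
Proof.
case: ltnP => kN.
  rewrite (bigD1 (Ordinal kN)) //= eqxx big1 => [|j /negP jk]; first ring.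
  by case: eqP => // E; exfalso; apply: jk; apply/eqP/val_inj.
by rewrite big1 // => j _; case: eqP => // E; have := ltn_ord j; rewrite E ltnNge kN.
Qed.

Lemma continuity_pt_eps (f : R -> R) y : continuity_pt f y ->
  forall e, 0 < e -> exists d, 0 < d /\ forall z, Rabs (z - y) < d -> Rabs (f z - f y) < e.
Proof.
move=> fy e e_gt0; case: (fy e e_gt0) => d [d_gt0 near_y]; exists d; split=> // z zy.
case: (Req_dec z y) => [->|zNy]; first by rewrite Rminus_diag Rabs_R0.
exact: (near_y z (conj (conj I (not_eq_sym zNy)) zy)).
Qed.

Section Continuity.
Variable m : nat.
Implicit Types f g : ('I_m -> R) -> R.

Lemma contR_const c : contR (fun _ : 'I_m -> R => c).
Proof. move=> x e He; exists 1; split=> [|y _]; rewrite ?Rminus_diag ?Rabs_R0; lra. Qed.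

Lemma contR_proj j : contR (fun x : 'I_m -> R => x j).
Proof. by move=> x e He; exists e; split=> // y; apply. Qed.

Lemma contR_min_radius f g x e1 e2 : contR f -> contR g -> 0 < e1 -> 0 < e2 ->
  exists d, 0 < d /\ forall y, (forall i, Rabs (y i - x i) < d) ->
    Rabs (f y - f x) < e1 /\ Rabs (g y - g x) < e2.
Proof.
move=> cf cg e1_gt0 e2_gt0.
case: (cf x e1 e1_gt0) => d1 [d1_gt0 H1]; case: (cg x e2 e2_gt0) => d2 [d2_gt0 H2].
exists (Rmin d1 d2); split=> [|y xy]; first exact: Rmin_pos.
split; [apply: H1 | apply: H2] => i; have := xy i.
  by have := Rmin_l d1 d2; lra.
by have := Rmin_r d1 d2; lra.
Qed.

Lemma contR_add f g : contR f -> contR g -> contR (fun x => f x + g x).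
Proof.
move=> cf cg x e e_gt0.
have e2_gt0 : 0 < e / 2 by lra.
case: (contR_min_radius x cf cg e2_gt0 e2_gt0) => d [d_gt0 H].
exists d; split=> // y /H [Hf Hg].
have -> : f y + g y - (f x + g x) = (f y - f x) + (g y - g x) by ring.
by have := Rabs_triang (f y - f x) (g y - g x); lra.
Qed.

Lemma contR_mul f g : contR f -> contR g -> contR (fun x => f x * g x).
Proof.
move=> cf cg x e e_gt0.
set A := Rabs (f x) + 1; set B := Rabs (g x) + 1.
have A_gt0 : 0 < A by have := Rabs_pos (f x); rewrite /A; lra.
have B_gt0 : 0 < B by have := Rabs_pos (g x); rewrite /B; lra.
have eB : 0 < e / (2 * B) by apply: Rdiv_lt_0_compat; lra.
have eA : 0 < Rmin 1 (e / (2 * A)) by apply: Rmin_pos; [|apply: Rdiv_lt_0_compat]; lra.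
case: (contR_min_radius x cf cg eB eA) => d [d_gt0 H].
exists d; split=> // y /H [Hf Hg].
have Hg1 := Rmin_l 1 (e / (2 * A)); have HgA := Rmin_r 1 (e / (2 * A)).
have gy_le : Rabs (g y) <= B.
  have := Rabs_triang (g y - g x) (g x).
  have -> : g y - g x + g x = g y by ring.
  by rewrite /B; lra.
have -> : f y * g y - f x * g x = (f y - f x) * g y + f x * (g y - g x) by ring.
apply: Rle_lt_trans (Rabs_triang _ _) _; rewrite !Rabs_mult.
have T1 : Rabs (f y - f x) * Rabs (g y) <= e / (2 * B) * B.
  by apply: Rmult_le_compat; try exact: Rabs_pos; lra.
have E1 : e / (2 * B) * B = e / 2 by field; lra.
have E2 : A * (e / (2 * A)) = e / 2 by field; lra.
have T2 : Rabs (f x) * Rabs (g y - g x) < A * (e / (2 * A)).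
  apply: Rle_lt_trans (_ : Rabs (f x) * (e / (2 * A)) < _).
    by apply: Rmult_le_compat_l; [exact: Rabs_pos | lra].
  by apply: Rmult_lt_compat_r; [apply: Rdiv_lt_0_compat | rewrite /A]; lra.
lra.
Qed.

Lemma contR_comp f (phi : R -> R) :
  contR f -> (forall x, continuity_pt phi (f x)) -> contR (fun x => phi (f x)).
Proof.
move=> cf cphi x e e_gt0.
case: (continuity_pt_eps (cphi x) e_gt0) => d1 [d1_gt0 H1].
case: (cf x d1 d1_gt0) => d [d_gt0 H]; exists d; split=> // y xy; exact: H1 (H y xy).
Qed.

End Continuity.

Lemma upd_same m (x : 'I_m -> R) i : upd x i (x i) = x.
Proof. by apply: functional_extensionality => j; rewrite /upd; case: eqP => [->|]. Qed.

Section Smoothness.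
Variable m : nat.
Implicit Types f g : ('I_m -> R) -> R.

Lemma Ck_down k f : Ck k.+1 f -> Ck k f.
Proof.
elim: k f => [|k' IH] f /=; first by case.
case=> cf df; split=> // i; case: (df i) => g [dg Cg]; exists g; split=> //; exact: IH.
Qed.

Lemma Ck_ext k f g : Ck k f -> (forall x, f x = g x) -> Ck k g.
Proof. by move=> Cf fg; rewrite -(functional_extensionality _ _ fg). Qed.

Lemma Ck_const k c : Ck k (fun _ : 'I_m -> R => c).
Proof.
elim: k c => [|k' IH] c /=; first exact: contR_const.
split=> [|i]; first exact: contR_const.
by exists (fun _ => 0); split=> [x|]; [apply: derivable_pt_lim_const | apply: IH].
Qed.

Lemma Ck_proj k j : Ck k (fun x : 'I_m -> R => x j).
Proof.
case: k => [|k'] /=; first exact: contR_proj.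
split=> [|i]; first exact: contR_proj.
exists (fun _ => if j == i then 1 else 0); split=> [x|]; last exact: Ck_const.
rewrite /upd; case: (j == i); [exact: derivable_pt_lim_id | exact: derivable_pt_lim_const].
Qed.


Lemma Ck_add k f g : Ck k f -> Ck k g -> Ck k (fun x => f x + g x).
Proof.
elim: k f g => [|k IH] f g /=; first exact: contR_add.
case=> cf df [cg dg]; split=> [|i]; first exact: contR_add.
case: (df i) => f' [df' Cf']; case: (dg i) => g' [dg' Cg'].
exists (fun x => f' x + g' x); split; last exact: IH.
by move=> x; apply: (derivable_pt_lim_plus (fun s => f (upd x i s)) (fun s => g (upd x i s))).
Qed.

Lemma Ck_mul k f g : Ck k f -> Ck k g -> Ck k (fun x => f x * g x).
Proof.
elim: k f g => [|k IH] f g; first exact: contR_mul.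
move=> Cf Cg; have Cf0 := Ck_down Cf; have Cg0 := Ck_down Cg.
move: Cf Cg => /= [cf df] [cg dg]; split=> [|i]; first exact: contR_mul.
case: (df i) => f' [df' Cf']; case: (dg i) => g' [dg' Cg'].
exists (fun x => f' x * g x + f x * g' x); split; last by apply: Ck_add; apply: IH.
move=> x; have := derivable_pt_lim_mult (fun s => f (upd x i s)) (fun s => g (upd x i s))
  _ _ _ (df' x) (dg' x).
by rewrite /= upd_same.
Qed.

Lemma Ck_opp k f : Ck k f -> Ck k (fun x => - f x).
Proof. by move=> Cf; apply: (Ck_ext (Ck_mul (Ck_const k (-1)) Cf)) => x; ring. Qed.

Lemma Ck_sub k f g : Ck k f -> Ck k g -> Ck k (fun x => f x - g x).
Proof. by move=> Cf Cg; apply: Ck_add Cf (Ck_opp Cg). Qed.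

Lemma Ck_sum k (I : Type) (r : seq I) (F : I -> ('I_m -> R) -> R) :
  (forall p, Ck k (F p)) -> Ck k (fun x => \big[Rplus/0]_(p <- r) F p x).
Proof.
move=> CF; elim: r => [|a r IH].
  by apply: (Ck_ext (Ck_const k 0)) => x; rewrite big_nil.
by apply: (Ck_ext (Ck_add (CF a) IH)) => x; rewrite big_cons.
Qed.

Definition smooth_on (D : R -> Prop) (phi : R -> R) : Prop :=
  exists C : (R -> R) -> Prop, C phi /\
    forall psi, C psi -> exists psi', (forall y, D y -> derivable_pt_lim psi y (psi' y)) /\ C psi'.

Lemma Ck_comp k D phi f : smooth_on D phi -> Ck k f -> (forall x, D (f x)) ->
  Ck k (fun x => phi (f x)).
Proof.
case=> C [Cphi C_der] Cf fD.
elim: k f Cf fD phi Cphi => [|k IH] f Cf fD phi Cphi.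
  apply: contR_comp => // x; case: (C_der _ Cphi) => phi' [dphi _].
  by apply: derivable_continuous_pt; exists (phi' (f x)); apply: dphi.
have Cf0 := Ck_down Cf.
move: Cf => /= [cf df]; case: (C_der _ Cphi) => phi' [dphi Cphi'].
split=> [|i].
  apply: contR_comp => // x.
  by apply: derivable_continuous_pt; exists (phi' (f x)); apply: dphi.
case: (df i) => f' [df' Cf'].
exists (fun x => phi' (f x) * f' x); split; last by apply: Ck_mul => //; apply: IH.
move=> x; have := derivable_pt_lim_comp (fun s => f (upd x i s)) phi _ _ _ (df' x).
by rewrite upd_same => H; apply: H; apply: dphi.
Qed.

End Smoothness.

Lemma derivable_pt_lim_ext (f g : R -> R) y l l' :
  (forall z, f z = g z) -> l = l' -> derivable_pt_lim g y l' -> derivable_pt_lim f y l.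
Proof. by move=> /functional_extensionality -> ->. Qed.

Lemma derivable_pt_lim_near (f g : R -> R) y l d : 0 < d ->
  (forall z, Rabs (z - y) < d -> f z = g z) ->
  derivable_pt_lim g y l -> derivable_pt_lim f y l.
Proof.
move=> d_gt0 fg dg eps eps_gt0; case: (dg eps eps_gt0) => del Hdel.
have m_gt0 : 0 < Rmin del d by apply: Rmin_pos => //; exact: cond_pos.
exists (mkposreal _ m_gt0) => h h0 /= hlt.
have := Rmin_l del d; have := Rmin_r del d => ? ?.
rewrite (fg y) ?Rminus_diag ?Rabs_R0 // (fg (y + h)); last by rewrite Rplus_minus_l; lra.
by apply: Hdel => //; lra.
Qed.

Lemma derivable_pt_lim_Rinv y : y <> 0 -> derivable_pt_lim Rinv y (- (/ y) ^ 2).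
Proof.
move=> y_neq0; have := derivable_pt_lim_div (fun _ => 1) id y 0 1
  (derivable_pt_lim_const 1 y) (derivable_pt_lim_id y) y_neq0.
apply: derivable_pt_lim_ext => [z|]; first by rewrite /div_fct /Rdiv Rmult_1_l.
by rewrite /Rsqr /id; field.
Qed.

Lemma smooth_on_Rinv : smooth_on (fun y => 0 < y) Rinv.
Proof.
exists (fun psi => exists a k, psi = fun y => a * (/ y) ^ k); split.
  by exists 1, 1%N; apply: functional_extensionality => y /=; ring.
move=> _ [a [k ->]]; exists (fun y => - (a * INR k) * (/ y) ^ k.+1); split; last by eauto.
move=> y y_gt0; have y_neq0 : y <> 0 by lra.
have := derivable_pt_lim_scal _ a _ _ (derivable_pt_lim_comp Rinv (fun z => z ^ k) y _ _
  (derivable_pt_lim_Rinv y_neq0) (derivable_pt_lim_pow (/ y) k)).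
by apply: derivable_pt_lim_ext => // ; case: k => [|k] /=; ring.
Qed.

Fixpoint lpoly (L : seq (R * nat)) (z : R) : R :=
  if L is (a, k) :: L' then a * z ^ k + lpoly L' z else 0.

Fixpoint lpoly_deriv (L : seq (R * nat)) : seq (R * nat) :=
  if L is (a, k) :: L' then (a * INR k, k.-1) :: lpoly_deriv L' else [::].

(* The derivative of [flat L] is [flat (flat_deriv L)], so the family of all
   [flat L] witnesses that [bump = flat [:: (1, 0)]] is smooth. *)
Definition flat (L : seq (R * nat)) (y : R) : R :=
  if Rlt_dec 0 y then lpoly L (/ y) * exp (- / y) else 0.

Fixpoint flat_deriv (L : seq (R * nat)) : seq (R * nat) :=
  if L is (a, k) :: L' then (a, k.+2) :: (- (a * INR k), k.+1) :: flat_deriv L' else [::].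

Lemma derivable_pt_lim_lpoly L z : derivable_pt_lim (lpoly L) z (lpoly (lpoly_deriv L) z).
Proof.
elim: L => [|[a k] L IH] /=; first exact: derivable_pt_lim_const.
have := derivable_pt_lim_plus _ _ _ _ _
  (derivable_pt_lim_scal _ a _ _ (derivable_pt_lim_pow z k)) IH.
by apply: derivable_pt_lim_ext => //; rewrite /mult_real_fct; ring.
Qed.

Lemma lpoly_flat_deriv L z :
  lpoly (flat_deriv L) z = z ^ 2 * lpoly L z - z ^ 2 * lpoly (lpoly_deriv L) z.
Proof. by elim: L => [|[a [|k]] L IH] /=; rewrite ?IH; ring. Qed.

Lemma flat_le0 L y : y <= 0 -> flat L y = 0.
Proof. by move=> y_le0; rewrite /flat; case: Rlt_dec => // y_gt0; lra. Qed.

Lemma derivable_pt_lim_flat_pos L y : 0 < y -> derivable_pt_lim (flat L) y (flat (flat_deriv L) y).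
Proof.
move=> y_gt0; have y_neq0 : y <> 0 by lra.
apply: (derivable_pt_lim_near (g := fun y => lpoly L (/ y) * exp (- / y)) y_gt0).
  by move=> z /Rabs_def2 zy; rewrite /flat; case: Rlt_dec => // z_le0; lra.
have dL := derivable_pt_lim_comp Rinv (lpoly L) y _ _
  (derivable_pt_lim_Rinv y_neq0) (derivable_pt_lim_lpoly L (/ y)).
have dE := derivable_pt_lim_comp (fun y => - / y) exp y _ _
  (derivable_pt_lim_opp _ _ _ (derivable_pt_lim_Rinv y_neq0)) (derivable_pt_lim_exp (- / y)).
apply: derivable_pt_lim_ext (derivable_pt_lim_mult _ _ _ _ _ dL dE) => //.
by rewrite /flat; case: Rlt_dec => // y_gt0'; rewrite lpoly_flat_deriv /Ranalysis1.comp /=; ring.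
Qed.

Lemma derivable_pt_lim_flat_neg L y : y < 0 -> derivable_pt_lim (flat L) y (flat (flat_deriv L) y).
Proof.
move=> y_lt0; rewrite flat_le0; last lra.
apply: (derivable_pt_lim_near (g := fun _ => 0) (d := - y)); first lra.
  by move=> z /Rabs_def2 zy; apply: flat_le0; lra.
exact: derivable_pt_lim_const.
Qed.

Lemma exp_mul_INR N u : exp (INR N * u) = exp u ^ N.
Proof.
elim: N => [|N IH]; first by rewrite /= Rmult_0_l exp_0.
by rewrite S_INR Rmult_plus_distr_r Rmult_1_l exp_plus IH /=; ring.
Qed.

Lemma pow_exp_opp_small N eps : 0 < eps ->
  exists Z, 0 < Z /\ forall z, Z <= z -> z ^ N * exp (- z) < eps.
Proof.
move=> eps_gt0; set c := INR N + 1.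
have c_gt0 : 0 < c by have := pos_INR N; rewrite /c; lra.
have cN_gt0 : 0 < c ^ N.+1 / eps by apply: Rdiv_lt_0_compat => //; apply: pow_lt.
exists (c ^ N.+1 / eps + 1); split=> [|z zZ]; first lra.
have z_gt0 : 0 < z by lra.
have zc_gt0 : 0 < z / c by apply: Rdiv_lt_0_compat.
have exp_ge : (z / c) ^ N.+1 <= exp z.
  have -> : exp z = exp (z / c) ^ N.+1.
    by rewrite -exp_mul_INR; congr exp; rewrite /c S_INR; field; have := pos_INR N; lra.
  by apply: pow_incr; have := exp_ineq1 _ (Rgt_not_eq _ _ zc_gt0); lra.
have zN_gt0 : 0 < z ^ N by apply: pow_lt.
rewrite exp_Ropp; apply: (Rle_lt_trans _ (z ^ N * / (z / c) ^ N.+1)).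
  apply: Rmult_le_compat_l; first lra.
  by apply: Rinv_le_contravar => //; apply: pow_lt.
have -> : z ^ N * / (z / c) ^ N.+1 = c ^ N.+1 / z.
  rewrite /Rdiv Rpow_mult_distr pow_inv /=; field.
  by have := pow_lt _ N c_gt0; lra.
apply: (Rmult_lt_reg_r z) => //; rewrite /Rdiv Rmult_assoc Rinv_l ?Rmult_1_r; last lra.
have zZ' : c ^ N.+1 / eps < z by lra.
have := Rmult_lt_compat_l eps _ _ eps_gt0 zZ'.
by have -> : eps * (c ^ N.+1 / eps) = c ^ N.+1 by field; lra.
Qed.

Lemma lpoly_bound L : exists C M, 0 <= C /\ forall z, 1 <= z -> Rabs (lpoly L z) <= C * z ^ M.
Proof.
elim: L => [|[a k] L [C [M [C_ge0 IH]]]] /=.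
  by exists 0, 0%N; split=> [|z _]; rewrite ?Rabs_R0; lra.
exists (Rabs a + C), (maxn k M); split=> [|z z_ge1]; first by have := Rabs_pos a; lra.
have zk : z ^ k <= z ^ maxn k M by apply: Rle_pow => //; apply/leP; exact: leq_maxl.
have zM : z ^ M <= z ^ maxn k M by apply: Rle_pow => //; apply/leP; exact: leq_maxr.
have zk_ge0 : 0 <= z ^ k by apply: pow_le; lra.
apply: Rle_trans (Rabs_triang _ _) _; rewrite Rabs_mult (Rabs_pos_eq (z ^ k)) //.
by have := IH z z_ge1; have := Rabs_pos a; nra.
Qed.

Lemma derivable_pt_lim_flat_0 L : derivable_pt_lim (flat L) 0 (flat (flat_deriv L) 0).
Proof.
rewrite flat_le0; last lra.
move=> eps eps_gt0; case: (lpoly_bound L) => C [M [C_ge0 HC]].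
have epsC : 0 < eps / (C + 1) by apply: Rdiv_lt_0_compat; lra.
case: (pow_exp_opp_small M.+1 epsC) => Z [Z_gt0 HZ].
set Z' := Rmax 1 Z; have := Rmax_l 1 Z; have := Rmax_r 1 Z; rewrite -/Z' => ZZ' Z'1.
have d_gt0 : 0 < / Z' by apply: Rinv_0_lt_compat; lra.
exists (mkposreal _ d_gt0) => h h_neq0 /= hlt.
rewrite Rplus_0_l (flat_le0 _ (Rle_refl 0)) /flat.
case: Rlt_dec => h_gt0; last by rewrite /Rdiv !Rminus_0_r Rmult_0_l Rabs_R0.
(* With [z = 1/h] the difference quotient is [lpoly L z * exp (- z) * z],
   which is at most [C z^(M+1) exp (- z)]. *)
set z := / h.
have z_gt : Z' < z.
  rewrite Rabs_pos_eq in hlt; last lra.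
  by have := Rinv_lt_contravar _ _ (Rmult_lt_0_compat _ _ h_gt0 d_gt0) hlt; rewrite Rinv_inv.
have -> : (lpoly L z * exp (- z) - 0) / h - 0 = lpoly L z * exp (- z) * z.
  by rewrite /z; field; lra.
have exp_gt0 := exp_pos (- z); have zM_gt0 : 0 < z ^ M by apply: pow_lt; lra.
rewrite !Rabs_mult (Rabs_pos_eq (exp (- z))) ?(Rabs_pos_eq z); try lra.
apply: (Rle_lt_trans _ (C * (z ^ M.+1 * exp (- z)))).
  have -> : C * (z ^ M.+1 * exp (- z)) = C * z ^ M * exp (- z) * z by rewrite /=; ring.
  by apply: Rmult_le_compat_r; [lra | apply: Rmult_le_compat_r; [lra | apply: HC; lra]].
have zexp_ge0 : 0 <= z ^ M.+1 * exp (- z) by apply: Rmult_le_pos; [apply: pow_le|]; lra.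
have small : (C + 1) * (z ^ M.+1 * exp (- z)) < eps.
  have -> : eps = (C + 1) * (eps / (C + 1)) by field; lra.
  by apply: Rmult_lt_compat_l; [lra | apply: HZ; lra].
nra.
Qed.

Lemma derivable_pt_lim_flat L y : derivable_pt_lim (flat L) y (flat (flat_deriv L) y).
Proof.
case: (Rtotal_order y 0) => [|[->|]].
- exact: derivable_pt_lim_flat_neg.
- exact: derivable_pt_lim_flat_0.
- exact: derivable_pt_lim_flat_pos.
Qed.

Definition bump : R -> R := flat [:: (1, 0%N)].

Lemma smooth_on_bump : smooth_on (fun _ => True) bump.
Proof.
exists (fun psi => exists L, psi = flat L); split; first by exists [:: (1, 0%N)].
by move=> _ [L ->]; exists (flat (flat_deriv L)); split=> [y _|]; [apply: derivable_pt_lim_flat | eauto].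
Qed.

Lemma bump_pos y : 0 < y -> bump y = exp (- / y).
Proof. by rewrite /bump /flat; case: Rlt_dec => //= _ _; ring. Qed.

Lemma bump_le0 y : y <= 0 -> bump y = 0.
Proof. exact: flat_le0. Qed.

Lemma bump_gt0 y : 0 < y -> 0 < bump y.
Proof. by move=> y_gt0; rewrite bump_pos //; apply: exp_pos. Qed.

Lemma bump_ge0 y : 0 <= bump y.
Proof.
case: (Rlt_le_dec 0 y) => [/bump_gt0|/bump_le0 ->]; lra.
Qed.

Lemma bump_le x y : x <= y -> bump x <= bump y.
Proof.
move=> xy; case: (Rlt_le_dec 0 x) => [x_gt0|/bump_le0 ->]; last exact: bump_ge0.
rewrite !bump_pos; try lra.
case: (Req_dec x y) => [->|xNy]; first lra.
apply/Rlt_le/exp_increasing/Ropp_lt_contravar.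
by apply: Rinv_lt_contravar; [apply: Rmult_lt_0_compat|]; lra.
Qed.

Fixpoint toTn (m : nat) (f : nat -> R) : Compactness.Tn m R :=
  if m is m'.+1 then (f 0%N, toTn m' (fun k => f k.+1)) else tt.

Fixpoint ofTn (m : nat) : Compactness.Tn m R -> nat -> R :=
  match m return Compactness.Tn m R -> nat -> R with
  | 0 => fun _ _ => 0
  | m'.+1 => fun t k => if k is k'.+1 then @ofTn m' t.2 k' else t.1
  end.

Lemma bounded_toTn m a b (f : nat -> R) :
  Compactness.bounded_n m (toTn m (fun _ => a)) (toTn m (fun _ => b)) (toTn m f) <->
  forall k, (k < m)%N -> a <= f k <= b.
Proof.
elim: m f => [|m IH] f /=; first by split=> // _ k.
rewrite IH; split=> [[f0 fS] [|k] Hk //= | Hf]; first exact: fS.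
by split=> [|k Hk]; apply: Hf.
Qed.

Lemma bounded_ofTn m a b t :
  Compactness.bounded_n m (toTn m (fun _ => a)) (toTn m (fun _ => b)) t ->
  forall k, (k < m)%N -> a <= ofTn t k <= b.
Proof. by elim: m t => [|m IH] [] //= t1 t2 [H1 H2] [|k] //= /IH; apply. Qed.

Lemma close_toTn m d (f : nat -> R) t :
  Compactness.close_n m d (toTn m f) t -> forall k, (k < m)%N -> Rabs (f k - ofTn t k) < d.
Proof. by elim: m f t => [|m IH] f [] //= t1 t2 [H1 H2] [|k] //= /(IH (fun k => f k.+1)); apply. Qed.

Lemma box_finite_cover (m : nat) (a b : R) (delta : (nat -> R) -> R) :
  (forall w, 0 < delta w) ->
  exists l : seq (nat -> R), forall x : nat -> R, (forall k, (k < m)%N -> a <= x k <= b) ->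
    exists w, List.In w l /\ (forall k, (k < m)%N -> a <= w k <= b) /\
      forall k, (k < m)%N -> Rabs (x k - w k) < delta w.
Proof.
move=> delta_gt0.
have := Compactness.compactness_list m (toTn m (fun _ => a)) (toTn m (fun _ => b))
  (fun t => mkposreal _ (delta_gt0 (ofTn t))).
move=> cover; apply: NNPP => no_cover; apply: cover => -[l Hl]; apply: no_cover.
exists (List.map (@ofTn m) l) => x /bounded_toTn /Hl [t [lt [Hb Hc]]].
exists (ofTn t); split; first exact: List.in_map.
by split; [apply: bounded_ofTn Hb | apply: close_toTn Hc].
Qed.

Lemma list_common_radius (T : Type) (l : seq T) (Q : T -> R -> Prop) :
  (forall x, List.In x l -> exists r, 0 < r /\ Q x r) ->
  (forall x r r', Q x r -> 0 < r' -> r' <= r -> Q x r') ->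
  exists r, 0 < r /\ forall x, List.In x l -> Q x r.
Proof.
move=> Ql Q_mono; elim: l Ql => [|a l IH] Ql; first by exists 1; split=> //; lra.
case: (Ql a (or_introl erefl)) => ra [ra_gt0 Qa].
case: IH => [x xl|r [r_gt0 Qr]]; first exact: Ql x (or_intror xl).
have m_gt0 := Rmin_pos _ _ ra_gt0 r_gt0.
exists (Rmin ra r); split=> // x [<-|xl].
  exact: Q_mono Qa m_gt0 (Rmin_l _ _).
exact: Q_mono (Qr x xl) m_gt0 (Rmin_r _ _).
Qed.

Section Hulls.
Variable n : nat.
Implicit Types (s : seq (pt n)) (x y t : pt n) (w : nat -> R).

Definition hull_comb s w (i : 'I_n.+1) : R :=
  \big[Rplus/0]_(j < size s) (w j * nth (fun _ => 0) s j i).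

Lemma in_hull_convex s x y (u : R) : in_hull s x -> in_hull s y -> 0 <= u <= 1 ->
  in_hull s (fun i => (1 - u) * x i + u * y i).
Proof.
move=> [wx [wx_ge0 [wx1 xE]]] [wy [wy_ge0 [wy1 yE]]] u01.
exists (fun j => (1 - u) * wx j + u * wy j); split=> [j js|].
  by have := wx_ge0 j js; have := wy_ge0 j js; nra.
split=> [|i]; first by rewrite big_split -!sumR_mull /= wx1 wy1; ring.
by rewrite xE yE !sumR_mull -big_split; apply: eq_bigr => j _ /=; ring.
Qed.

Lemma vertex_in_hull s j : (j < size s)%N -> in_hull s (nth (fun _ => 0) s j).
Proof.
move=> js; exists (fun j' => if j' == j then 1 else 0); split=> [j' _|].
  by case: (j' == j); lra.
split=> [|i].
  by rewrite (sumR_indicator _ j (fun _ => 1)) js.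
rewrite (eq_bigr (fun j' : 'I_(size s) =>
  if (j' : nat) == j then nth (fun _ => 0) s j' i else 0)); first by rewrite (sumR_indicator _ j (fun j' => nth (fun _ => 0) s j' i)) js.
by move=> j' _; case: eqP => _; ring.
Qed.

Lemma hull_comb_close s w w' i d : (forall j, (j < size s)%N -> Rabs (w' j - w j) < d) ->
  Rabs (hull_comb s w' i - hull_comb s w i) <=
    d * \big[Rplus/0]_(j < size s) Rabs (nth (fun _ => 0) s j i).
Proof.
move=> ww'; rewrite /hull_comb -sumR_sub sumR_mull /=.
apply: Rle_trans (Rabs_sumR_le _ _ _) _; apply: sumR_le => j.
rewrite -Rmult_minus_distr_r Rabs_mult.
by apply: Rmult_le_compat_r; [exact: Rabs_pos | apply/Rlt_le/ww'].
Qed.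

Lemma sum_close k w w' d : (forall j, (j < k)%N -> Rabs (w' j - w j) < d) ->
  Rabs (\big[Rplus/0]_(j < k) w' j - \big[Rplus/0]_(j < k) w j) <= INR k * d.
Proof.
move=> ww'; rewrite -sumR_sub -sumR_const_ord.
by apply: Rle_trans (Rabs_sumR_le _ _ _) _; apply: sumR_le => j; apply/Rlt_le/ww'.
Qed.

(* If [w] sums to [1], its combination misses [t] in some coordinate by a
   margin that survives small perturbations; otherwise weights close to [w] do
   not sum to [1] either, and the claim is vacuous. *)
Lemma hull_local_sep s t w : ~ in_hull s t -> (forall j, (j < size s)%N -> 0 <= w j) ->
  exists d, 0 < d /\ forall w', (forall j, (j < size s)%N -> 0 <= w' j) ->
    \big[Rplus/0]_(j < size s) w' j = 1 ->
    (forall j, (j < size s)%N -> Rabs (w' j - w j) < d) ->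
    exists i, d <= Rabs (hull_comb s w' i - t i).
Proof.
move=> tNs w_ge0; set k := size s.
case: (classic (\big[Rplus/0]_(j < k) w j = 1)) => [w1|wN1].
  have [i wi] : exists i, hull_comb s w i <> t i.
    apply: NNPP => Hn; apply: tNs; exists w; do 2!split=> //.
    by move=> i; apply: NNPP => Hne; apply: Hn; exists i => /esym.
  set e := Rabs (hull_comb s w i - t i).
  have e_gt0 : 0 < e by apply: Rabs_pos_lt; lra.
  set C := \big[Rplus/0]_(j < k) Rabs (nth (fun _ => 0) s j i).
  have C_ge0 : 0 <= C by apply: sumR_ge0 => j; exact: Rabs_pos.
  have dC : e / (2 * (C + 1)) * C <= e / 2.
    have -> : e / (2 * (C + 1)) * C = e / 2 * (C / (C + 1)) by field; lra.
    suff : C / (C + 1) <= 1 by nra.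
    by apply: (Rmult_le_reg_r (C + 1)); [|rewrite /Rdiv Rmult_assoc Rinv_l]; lra.
  have d_le : e / (2 * (C + 1)) <= e / 2.
    by apply: Rmult_le_compat_l; [|apply: Rinv_le_contravar]; lra.
  exists (e / (2 * (C + 1))); split=> [|w' _ _ ww']; first by apply: Rdiv_lt_0_compat; lra.
  exists i; have := hull_comb_close i ww'; rewrite -/C -/e => close.
  have := Rabs_triang_inv (hull_comb s w i - t i) (hull_comb s w i - hull_comb s w' i).
  have -> : hull_comb s w i - t i - (hull_comb s w i - hull_comb s w' i) =
    hull_comb s w' i - t i by ring.
  by rewrite (Rabs_minus_sym (hull_comb s w i) (hull_comb s w' i)) -/e; lra.
set a := Rabs (\big[Rplus/0]_(j < k) w j - 1).
have a_gt0 : 0 < a by apply: Rabs_pos_lt; lra.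
have k_ge0 := pos_INR k.
exists (a / (INR k + 1)); split=> [|w' _ w'1 ww']; first by apply: Rdiv_lt_0_compat; lra.
have := sum_close ww'; rewrite w'1 Rabs_minus_sym -/a => close; exfalso.
have : INR k * (a / (INR k + 1)) < a.
  have -> : INR k * (a / (INR k + 1)) = a - a / (INR k + 1) by field; lra.
  have : 0 < a / (INR k + 1) by apply: Rdiv_lt_0_compat; lra.
  lra.
lra.
Qed.

Lemma not_in_hull_sep s t : ~ in_hull s t ->
  exists r, 0 < r /\ forall y, in_hull s y -> exists i, r <= Rabs (y i - t i).
Proof.
move=> tNs; set k := size s.
pose sep_radius w d := 0 < d /\
  ((forall j, (j < k)%N -> 0 <= w j) -> forall w', (forall j, (j < k)%N -> 0 <= w' j) ->
    \big[Rplus/0]_(j < k) w' j = 1 -> (forall j, (j < k)%N -> Rabs (w' j - w j) < d) ->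
    exists i, d <= Rabs (hull_comb s w' i - t i)).
have [delta delta_sep] : exists delta, forall w, sep_radius w (delta w).
  apply: (choice sep_radius) => w.
  case: (classic (forall j, (j < k)%N -> 0 <= w j)) => [w_ge0 | wN].
    by case: (hull_local_sep tNs w_ge0) => d [d_gt0 Hd]; exists d.
  by exists 1; split=> [|/wN]; [lra|].
have delta_gt0 w : 0 < delta w by case: (delta_sep w).
case: (box_finite_cover k 0 1 delta_gt0) => l Hl.
case: (@list_common_radius _ l (fun w r => r <= delta w)) => [w _|w r r' ? ? ?|r [r_gt0 Hr]].
- by exists (delta w); split=> //; lra.
- lra.
exists r; split=> // y [w' [w'_ge0 [w'1 yE]]].
have w'_box j : (j < k)%N -> 0 <= w' j <= 1.
  move=> jk; split; first exact: w'_ge0.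
  rewrite -w'1; apply: (sumR_ge_ord (F := fun j : 'I_k => w' j) (Ordinal jk)) => i.
  exact: w'_ge0.
case: (Hl w' w'_box) => w [wl [w_box ww']].
case: ((delta_sep w).2 (fun j jk => (w_box j jk).1) w' w'_ge0 w'1 ww') => i Hi.
by exists i; have := Hr w wl; rewrite yE; rewrite /hull_comb in Hi; lra.
Qed.

End Hulls.

Lemma ex_min_nat (Q : nat -> Prop) k : Q k -> exists m, Q m /\ forall j, (j < m)%N -> ~ Q j.
Proof.
move=> Qk; apply: NNPP => no_min.
suff : forall N j, (j <= N)%N -> ~ Q j by move/(_ k k (leqnn k)).
elim=> [|N IH] j.
  rewrite leqn0 => /eqP -> Q0; apply: no_min; exists 0%N; split=> // j'; by rewrite ltn0.
rewrite leq_eqVlt => /orP [/eqP -> QN | /IH //].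
by apply: no_min; exists N.+1; split=> // j'; rewrite ltnS; apply: IH.
Qed.

Lemma mask_full (T : Type) (m : bitseq) (s : seq T) :
  size m = size s -> (size s <= size (mask m s))%N -> mask m s = s.
Proof.
move=> ms; rewrite size_mask // => sm.
have cm : count id m == size m by rewrite eqn_leq count_size ms.
have /all_pred1P -> : all (pred1 true) m by rewrite (@eq_all _ _ id) ?all_count // => -[].
by rewrite mask_true ?ms.
Qed.

Lemma In_mask (T : Type) (m : bitseq) (s : seq T) v : List.In v (mask m s) -> List.In v s.
Proof.
elim: s m => [|x s IH] [|[] m] //= => [[->|/IH] | /IH]; by [left | right].
Qed.

Definition std_vertex0 n : pt n := fun i => if i == ord0 then 1 else 0.

Lemma inA_std_vertex0 n : inA (@std_vertex0 n).
Proof. by rewrite /inA /std_vertex0 (bigD1 ord0) //= big1 => [|i /negPf ->]; ring. Qed.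

Section Subdivision.
Variables (n : nat) (K : seq (pt n) -> Prop).
Hypothesis HK : subdivides_std_simplex K.

Lemma in_hull_inA s x : K s -> in_hull s x -> inA x.
Proof. by move=> Ks sx; case: (sd_in_face HK Ks) => F [_ /(_ x sx) [[]]]. Qed.

Lemma in_hull_inDelta s x : K s -> in_hull s x -> inDelta x.
Proof. by move=> Ks sx; case: (sd_in_face HK Ks) => F [_ /(_ x sx) []]. Qed.

(* Take [v] a vertex of a simplex of minimal dimension containing [t]: a simplex
   containing [t] meets it in a face containing [t], which by minimality is the
   whole simplex, so [v] is one of its vertices. *)
Lemma exists_carrier_vertex t : exists v, inA v /\
  forall s, K s -> ~ List.In v s -> ~ in_hull s t.
Proof.
case: (classic (exists s, K s /\ in_hull s t)) => [[s0 [Ks0 s0t]] | no_carrier]; last first.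
  by exists (@std_vertex0 n); split=> [|s Ks _ st]; [apply: inA_std_vertex0 | apply: no_carrier; exists s].
case: (@ex_min_nat (fun k => exists s, K s /\ in_hull s t /\ size s = k) (size s0)).
  by exists s0.
move=> k [[tau [Ktau [taut tau_k]]] tau_min].
case Etau : tau (sd_nonempty HK Ktau) => [//|v tau'] _.
exists v; split.
  by apply: (in_hull_inA Ktau); rewrite Etau; apply: (vertex_in_hull (s := v :: tau') (j := 0%N)).
move=> s Ks vNs st; apply: vNs.
case: (sd_inter HK Ks Ktau) => [/(_ t) [] // | [r [[m1 [_ [r_m1 _]]] [[m2 [m2_size [r_m2 r_ne]]] r_cap]]]].
have Kr : K r by apply: (sd_faces HK Ktau); exists m2.
have rt : in_hull r t by apply/r_cap.
have size_r : (k <= size r)%N by rewrite leqNgt; apply/negP => /tau_min; apply; exists r.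
have r_tau : r = tau by rewrite r_m2 mask_full // -r_m2 tau_k.
by apply: (@In_mask _ m1); rewrite -r_m1 r_tau Etau; left.
Qed.

(* Local finiteness reduces the separation to finitely many closed simplices. *)
Lemma exists_separating_vertex t : exists v, inA v /\ exists r, 0 < r /\
  forall s, K s -> ~ List.In v s -> forall y, in_hull s y -> exists i, r <= Rabs (y i - t i).
Proof.
case: (exists_carrier_vertex t) => v [vA v_carrier].
case: (sd_locfin HK t) => d [d_gt0 [L near_t]].
pose sep s r := K s -> ~ List.In v s -> forall y, in_hull s y -> exists i, r <= Rabs (y i - t i).
case: (@list_common_radius _ L sep) => [s _ | s r r' Hs _ r'r Ks vNs y sy | r [r_gt0 Hr]].
- case: (classic (K s /\ ~ List.In v s)) => [[Ks vNs] | Hno].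
    by case: (not_in_hull_sep (v_carrier s Ks vNs)) => r [r_gt0 Hr]; exists r; split=> // _ _.
  by exists 1; split=> [|Ks vNs]; [lra | case: Hno].
- by case: (Hs Ks vNs y sy) => i Hi; exists i; lra.
exists v; split=> //; exists (Rmin d r); split=> [|s Ks vNs y sy]; first exact: Rmin_pos.
case: (classic (exists i, d <= Rabs (y i - t i))) => [[i Hi] | Hno].
  by exists i; have := Rmin_l d r; lra.
have sL : List.In s L.
  apply: (near_t s Ks); exists y; split=> // i.
  by apply: Rnot_le_lt => Hi; apply: Hno; exists i.
by case: (Hr s sL Ks vNs y sy) => i Hi; exists i; have := Rmin_r d r; lra.
Qed.

End Subdivision.

Lemma In_nth_index (T : Type) (x0 : T) (s : seq T) v :
  List.In v s -> exists j, (j < size s)%N /\ nth x0 s j = v.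
Proof.
elim: s => [|a s IH] //= [-> | /IH [j [js <-]]]; first by exists 0%N.
by exists j.+1.
Qed.

(* The weight of a vertex collects the coefficients of all points equal to it. *)
Lemma in_hull_vertex_comb n (I : Type) (P : seq I) (a : I -> R) (q : I -> pt n) s :
  (forall p, 0 <= a p) -> \big[Rplus/0]_(p <- P) a p = 1 ->
  (forall p, List.In p P -> ~ List.In (q p) s -> a p = 0) ->
  in_hull s (fun i => \big[Rplus/0]_(p <- P) (a p * q p i)).
Proof.
move=> a_ge0 a1 a_out; set k := size s.
have [idx idx_vertex] : exists idx : I -> nat, forall p, List.In (q p) s ->
    (idx p < k)%N /\ nth (fun _ => 0) s (idx p) = q p.
  apply: (choice (fun p j => List.In (q p) s -> (j < k)%N /\ nth (fun _ => 0) s j = q p)) => p.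
  case: (classic (List.In (q p) s)) => [/(In_nth_index (fun _ => 0)) [j Hj] | qNs].
    by exists j.
  by exists 0%N.
have a_idx p : List.In p P -> a p = if (idx p < k)%N then a p else 0.
  move=> pP; case: ltnP => // idx_ge; apply: a_out => // /idx_vertex [].
  by rewrite ltnNge idx_ge.
exists (fun j => \big[Rplus/0]_(p <- P) (if j == idx p then a p else 0)).
split=> [j _|]; first by apply: sumR_ge0 => p; case: eqP => _; [apply: a_ge0 | lra].
split=> [|i].
  rewrite exchange_big /= -a1; apply: eq_sumR_In => p pP.
  by rewrite (sumR_indicator _ _ (fun _ => a p)) -a_idx.
rewrite [RHS](eq_bigr (fun j : 'I_k => \big[Rplus/0]_(p <- P)
  (if (j : nat) == idx p then a p * nth (fun _ => 0) s j i else 0))) => [|j _]; last first.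
  by rewrite sumR_mulr; apply: eq_bigr => p _ /=; case: (_ == _); rewrite ?Rmult_0_l.
rewrite exchange_big /=; apply: eq_sumR_In => p pP.
rewrite (sumR_indicator _ _ (fun j => a p * nth (fun _ => 0) s j i)).
case: (classic (List.In (q p) s)) => [/idx_vertex [-> ->] // | qNs].
by rewrite a_out //; case: ltnP => _; ring.
Qed.

Section Construction.
Variables (n : nat) (P : seq (pt n)) (V : pt n -> pt n) (rho2 : pt n -> R) (c : R).
Hypothesis c_gt0 : 0 < c.

Definition sqdist (x p : pt n) : R := \big[Rplus/0]_(i < n.+1) ((x i - p i) * (x i - p i)).

Definition weight (p x : pt n) : R := bump (rho2 p - sqdist x p).

Definition total_weight (x : pt n) : R := \big[Rplus/0]_(p <- P) weight p x.

Definition step (s : R) : R := bump (s - c / 2) / (bump (s - c / 2) + bump (c - s)).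

(* A smooth substitute for [max s (c/2)] that agrees with [s] on [s >= c]. *)
Definition soft_floor (s : R) : R := s * step s + c / 2 * (1 - step s).

Definition homotopy (x : pt n) (t : R) : pt n := fun j =>
  x j + t * \big[Rplus/0]_(p <- P) (weight p x / soft_floor (total_weight x) * (V p j - x j)).

Lemma step_den_gt0 s : 0 < bump (s - c / 2) + bump (c - s).
Proof.
have := bump_ge0 (s - c / 2); have := bump_ge0 (c - s).
case: (Rlt_le_dec (c / 2) s) => cs.
  by have := @bump_gt0 (s - c / 2) ltac:(lra); lra.
by have := @bump_gt0 (c - s) ltac:(lra); lra.
Qed.

Lemma step_bounds s : 0 <= step s <= 1.
Proof.
have den_gt0 := step_den_gt0 s; have := bump_ge0 (s - c / 2); have := bump_ge0 (c - s).
rewrite /step => ? ?; split; first by apply: Rmult_le_pos => //; apply/Rlt_le/Rinv_0_lt_compat.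
by apply: (Rmult_le_reg_r _ _ _ den_gt0); rewrite /Rdiv Rmult_assoc Rinv_l; lra.
Qed.

Lemma soft_floor_ge s : 0 <= s -> c / 2 <= soft_floor s.
Proof.
move=> s_ge0; rewrite /soft_floor; have [step_ge0 step_le1] := step_bounds s.
case: (Rle_lt_dec s (c / 2)) => [sc | /Rlt_le cs]; last by nra.
by rewrite /step bump_le0 /Rdiv ?Rmult_0_l; lra.
Qed.

Lemma soft_floor_id s : c <= s -> soft_floor s = s.
Proof.
move=> cs; rewrite /soft_floor /step (@bump_le0 (c - s)) ?Rplus_0_r ?Rdiv_diag; try lra.
by have := @bump_gt0 (s - c / 2) ltac:(lra); lra.
Qed.

Lemma total_weight_ge0 x : 0 <= total_weight x.
Proof. by apply: sumR_ge0 => p; apply: bump_ge0. Qed.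

Lemma homotopy_smooth : smooth_homotopy homotopy.
Proof.
set xv := fun v : 'I_n.+2 -> R => fun i : 'I_n.+1 => v (widen_ord (leqnSn n.+1) i).
have C_weight k p : Ck k (fun v => weight p (xv v)).
  apply: (Ck_comp smooth_on_bump) => //; apply: Ck_sub; first exact: Ck_const.
  by apply: Ck_sum => i; apply: Ck_mul; apply: Ck_sub; [exact: Ck_proj | exact: Ck_const | exact: Ck_proj | exact: Ck_const].
have C_total k : Ck k (fun v => total_weight (xv v)) by apply: Ck_sum.
have C_bump k f : Ck k f -> Ck k (fun v => bump (f v)) by move=> Cf; apply: (Ck_comp smooth_on_bump).
have C_step k : Ck k (fun v => step (total_weight (xv v))).
  apply: Ck_mul; first by apply/C_bump/Ck_sub; [|apply: Ck_const].
  apply: (Ck_comp smooth_on_Rinv); last by move=> v; apply: step_den_gt0.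
  by apply: Ck_add; apply/C_bump/Ck_sub; try apply: Ck_const.
have C_floor k : Ck k (fun v => / soft_floor (total_weight (xv v))).
  apply: (Ck_comp smooth_on_Rinv) => [|v]; last first.
    by have := soft_floor_ge (total_weight_ge0 (xv v)); lra.
  apply: Ck_add; first exact: Ck_mul.
  by apply: Ck_mul; [apply: Ck_const | apply: Ck_sub; [apply: Ck_const |]].
move=> j k; apply: Ck_add; first exact: Ck_proj.
apply: Ck_mul; first exact: Ck_proj.
apply: Ck_sum => p; apply: Ck_mul; first exact: Ck_mul.
by apply: Ck_sub; [apply: Ck_const | apply: Ck_proj].
Qed.

Lemma homotopy0 x : homotopy x 0 = x.
Proof. by apply: functional_extensionality => j; rewrite /homotopy; ring. Qed.

Lemma homotopy_affine x t j : homotopy x t j = (1 - t) * x j + t * homotopy x 1 j.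
Proof. by rewrite /homotopy; ring. Qed.

Lemma homotopy_inA x t : (forall p, inA (V p)) -> inA x -> inA (homotopy x t).
Proof.
move=> VA xA; rewrite /inA /homotopy big_split -sumR_mull exchange_big /= xA.
rewrite (@eq_sumR_In _ _ _ (fun _ => 0)) ?big1_eq; first ring.
by move=> p _; rewrite -sumR_mull sumR_sub VA xA /=; ring.
Qed.

Lemma homotopy1_in_hull s x : c <= total_weight x ->
  (forall p, List.In p P -> ~ List.In (V p) s -> weight p x = 0) -> in_hull s (homotopy x 1).
Proof.
move=> c_le weight_out; have total_gt0 : 0 < total_weight x by lra.
have a_ge0 p : 0 <= weight p x / total_weight x.
  by apply: Rmult_le_pos; [apply: bump_ge0 | apply/Rlt_le/Rinv_0_lt_compat].
have a1 : \big[Rplus/0]_(p <- P) (weight p x / total_weight x) = 1.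
  by rewrite /Rdiv -sumR_mulr -/(total_weight x) Rinv_r //; lra.
have a_out p : List.In p P -> ~ List.In (V p) s -> weight p x / total_weight x = 0.
  by move=> pP VNs; rewrite weight_out // /Rdiv Rmult_0_l.
have -> : homotopy x 1 =
    fun j => \big[Rplus/0]_(p <- P) (weight p x / total_weight x * V p j).
  apply: functional_extensionality => j.
  rewrite /homotopy soft_floor_id // Rmult_1_l.
  under eq_bigr => p _ do rewrite Rmult_minus_distr_l.
  by rewrite sumR_sub -sumR_mulr a1; ring.
exact: in_hull_vertex_comb a_ge0 a1 a_out.
Qed.

End Construction.

Lemma In_enum N (i : 'I_N) : List.In i (enum 'I_N).
Proof.
have : i \in enum 'I_N by rewrite mem_enum.
by elim: (enum 'I_N) => [|a l IH] //=; rewrite inE => /orP [/eqP ->|/IH]; [left | right].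
Qed.

Lemma open_in_A_nbhd n (S : pt n -> Prop) eta :
  open_in_A (fun x => inA x /\ exists y, S y /\ forall i, Rabs (x i - y i) < eta).
Proof.
move=> x [xA [y [Sy xy]]]; split=> //.
case: (@list_common_radius _ (enum 'I_n.+1) (fun i d => d <= eta - Rabs (x i - y i)))
  => [i _ | i d d' ? ? ? | d [d_gt0 Hd]]; try lra.
  by exists (eta - Rabs (x i - y i)); have := xy i; split; lra.
exists d; split=> // z zA zx; split=> //; exists y; split=> // i.
have := Hd i (In_enum i); have := zx i; have := Rabs_triang (z i - x i) (x i - y i).
have -> : z i - x i + (x i - y i) = z i - y i by ring.
lra.
Qed.

Section Retraction.
Variables (n : nat) (K : seq (pt n) -> Prop).
Hypothesis HK : subdivides_std_simplex K.
Variables (V : pt n -> pt n) (r : pt n -> R).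
Hypothesis V_inA : forall p, inA (V p).
Hypothesis r_gt0 : forall p, 0 < r p.
Hypothesis V_sep : forall p s, K s -> ~ List.In (V p) s ->
  forall y, in_hull s y -> exists i, r p <= Rabs (y i - p i).

(* [del p] is the radius of the covering cubes: the bump around [p], of squared
   radius [rho2 p], is at least [bump (del p ^ 2)] on its cube and vanishes off
   the ball of radius [r p / 2]. *)
Definition del (p : pt n) : R := r p / (2 * (INR n + 2)).
Definition rho2 (p : pt n) : R := (INR n + 2) * del p ^ 2.

Lemma del_gt0 p : 0 < del p.
Proof. by apply: Rdiv_lt_0_compat => //; have := pos_INR n; lra. Qed.

Lemma rho2_le p : rho2 p <= (r p / 2) ^ 2.
Proof.
rewrite /rho2 /del; have := pos_INR n; set N := INR n + 2 => n_ge0.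
have -> : N * (r p / (2 * N)) ^ 2 = (r p / 2) ^ 2 / N by field; rewrite /N; lra.
apply: (Rmult_le_reg_r N); first by rewrite /N; lra.
rewrite /Rdiv Rmult_assoc Rinv_l; last by rewrite /N; lra.
by have := pow2_ge_0 (r p / 2); rewrite /N; nra.
Qed.

Lemma exists_cube_cover : exists P : seq (pt n), forall x, (forall i, -1 <= x i <= 2) ->
  exists p, List.In p P /\ forall i, Rabs (x i - p i) < del p.
Proof.
pose of_nat (w : nat -> R) : pt n := fun i => w i.
case: (box_finite_cover n.+1 (-1) 2 (fun w => del_gt0 (of_nat w))) => l Hl.
exists (map of_nat l) => x x_box.
case: (Hl (fun k => x (inord k))) => [k _ | w [wl [_ xw]]]; first exact: x_box.
exists (of_nat w); split; first exact: List.in_map.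
by move=> i; have := xw i (ltn_ord i); rewrite inord_val.
Qed.

Variables (P : seq (pt n)) (c eta : R).
Hypothesis P_cover : forall x, (forall i, -1 <= x i <= 2) ->
  exists p, List.In p P /\ forall i, Rabs (x i - p i) < del p.
Hypothesis c_gt0 : 0 < c.
Hypothesis c_le : forall p, List.In p P -> c <= bump (del p ^ 2).
Hypothesis eta_gt0 : 0 < eta.
Hypothesis eta_le1 : eta <= 1.
Hypothesis eta_le : forall p, List.In p P -> eta <= r p / 2.

Let H := homotopy P V rho2 c.

Definition near (s : seq (pt n)) (x : pt n) : Prop :=
  exists y, in_hull s y /\ forall i, Rabs (x i - y i) < eta.

Lemma near_cube s x : K s -> near s x -> forall i, -1 <= x i <= 2.
Proof.
move=> Ks [y [sy xy]] i; have [yA y_ge0] := in_hull_inDelta HK Ks sy.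
have : y i <= 1 by rewrite -yA; apply: (sumR_ge_ord (F := y)).
by have := y_ge0 i; have := Rabs_def2 _ _ (xy i); lra.
Qed.

Lemma total_weight_near s x : K s -> near s x -> c <= total_weight P rho2 x.
Proof.
move=> Ks xs; case: (P_cover (near_cube Ks xs)) => p [pP xp].
have w_le : weight rho2 p x <= total_weight P rho2 x.
  by apply: (sumR_ge_In (F := fun q => weight rho2 q x)) => // q; apply: bump_ge0.
apply: Rle_trans (c_le pP) (Rle_trans _ _ _ _ w_le).
apply: bump_le; rewrite /rho2.
suff : sqdist x p <= (INR n + 1) * del p ^ 2 by lra.
rewrite /sqdist -S_INR -sumR_const_ord.
by apply: sumR_le => i; have := Rabs_def2 _ _ (xp i); have := del_gt0 p; nra.
Qed.

Lemma weight_near_eq0 s x p : K s -> near s x -> List.In p P -> ~ List.In (V p) s ->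
  weight rho2 p x = 0.
Proof.
move=> Ks [y [sy xy]] pP VNs; case: (V_sep Ks VNs sy) => i yp.
rewrite /weight bump_le0 //; apply: Rnot_lt_le => in_ball.
have sq_le : (x i - p i) * (x i - p i) <= sqdist x p.
  exact: (sumR_ge_ord (F := fun i => (x i - p i) * (x i - p i))) (fun j => Rle_0_sqr _).
have xp : Rabs (x i - p i) < r p / 2.
  rewrite -(Rabs_pos_eq (r p / 2)); last by have := r_gt0 p; lra.
  by apply: Rsqr_lt_abs_0; have := rho2_le p; rewrite /Rsqr /= Rmult_1_r in in_ball *; lra.
have := eta_le pP; have := xy i; have := Rabs_triang (y i - x i) (x i - p i).
have -> : y i - x i + (x i - p i) = y i - p i by ring.
by rewrite (Rabs_minus_sym (y i) (x i)); lra.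
Qed.

Lemma homotopy1_near s x : K s -> near s x -> in_hull s (H x 1).
Proof.
move=> Ks xs; apply: homotopy1_in_hull => //; first exact: total_weight_near Ks xs.
by move=> p; apply: weight_near_eq0.
Qed.

Lemma homotopy_retraction :
  smooth_homotopy H /\
  (forall x t, inA x -> 0 <= t <= 1 -> inA (H x t)) /\
  (forall x, inA x -> H x 0 = x) /\
  (forall t, 0 <= t <= 1 -> forall s, K s -> forall x, in_hull s x -> in_hull s (H x t)) /\
  (forall s, K s -> exists U : pt n -> Prop,
     open_in_A U /\ (forall x, in_hull s x -> U x) /\ (forall x, U x -> in_hull s (H x 1))).
Proof.
have near_refl s x : in_hull s x -> near s x.
  by exists x; split=> // i; rewrite Rminus_diag Rabs_R0.
split; first exact: homotopy_smooth.
split; first by move=> x t xA _; apply: homotopy_inA.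
split; first by move=> x _; apply: homotopy0.
split=> [t t01 s Ks x sx | s Ks].
  have -> : H x t = fun j => (1 - t) * x j + t * H x 1 j.
    by apply: functional_extensionality => j; apply: homotopy_affine.
  by apply: in_hull_convex => //; apply: homotopy1_near (near_refl _ _ sx).
exists (fun x => inA x /\ near s x); split; first exact: open_in_A_nbhd.
split=> [x sx | x [_ xs]]; last exact: homotopy1_near.
by split; [exact: (in_hull_inA HK Ks sx) | exact: near_refl].
Qed.

End Retraction.

Theorem mainTheorem13 (n : nat) (K : seq (pt n) -> Prop)
  (HK : subdivides_std_simplex K) :
  exists H : pt n -> R -> pt n,
    smooth_homotopy H /\
    (forall x t, inA x -> 0 <= t <= 1 -> inA (H x t)) /\
    (forall x, inA x -> H x 0 = x) /\
    (forall t, 0 <= t <= 1 -> forall s, K s ->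
       forall x, in_hull s x -> in_hull s (H x t)) /\
    (forall s, K s -> exists U : pt n -> Prop,
       open_in_A U /\ (forall x, in_hull s x -> U x) /\
       (forall x, U x -> in_hull s (H x 1))).
Proof.
pose sep (t : pt n) (vr : pt n * R) := inA vr.1 /\ 0 < vr.2 /\
  forall s, K s -> ~ List.In vr.1 s -> forall y, in_hull s y -> exists i, vr.2 <= Rabs (y i - t i).
have [f f_sep] : exists f, forall t, sep t (f t).
  apply: (choice sep) => t; case: (exists_separating_vertex HK t) => v [vA [r [r_gt0 Hr]]].
  by exists (v, r).
have V_inA t : inA (f t).1 by case: (f_sep t).
have r_gt0 t : 0 < (f t).2 by case: (f_sep t) => _ [].
have V_sep t : forall s, K s -> ~ List.In (f t).1 s -> forall y, in_hull s y ->
    exists i, (f t).2 <= Rabs (y i - t i) by case: (f_sep t) => _ [].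
have [P P_cover] := exists_cube_cover r_gt0.
case: (@list_common_radius _ P (fun p c => c <= bump (del (fun t => (f t).2) p ^ 2)))
  => [p _ | p c c' ? ? ? | c [c_gt0 c_le]]; try lra.
  by exists (bump (del (fun t => (f t).2) p ^ 2)); split; [apply/bump_gt0/pow_lt/del_gt0 | lra].
case: (@list_common_radius _ P (fun p e => e <= (f p).2 / 2))
  => [p _ | p e e' ? ? ? | e [e_gt0 e_le]]; try lra.
  by exists ((f p).2 / 2); have := r_gt0 p; split; lra.
have eta_gt0 : 0 < Rmin 1 e by apply: Rmin_pos; lra.
eexists; apply: (homotopy_retraction HK V_inA r_gt0 V_sep P_cover c_gt0 c_le eta_gt0
  (Rmin_l 1 e)) => p pP; have := e_le p pP; have := Rmin_r 1 e; lra.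
Qed.
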